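(* For a set $\mathcal{R}$ of languages over $\Sigma$ and a regular language $R\subseteq\Sigma^*$ let $\mathcal{R}\,\dot-\,R=\{L\setminus R\mid L\in\mathcal{R}\}$. (1) There exist a rational set of regular languages $\mathcal{R}$ and a regular $R$ such that $\mathcal{R}\,\dot-\,R$ is not a rational set of regular languages. (2) If $\mathcal{R}$ is a finite rational set of regular languages and $R$ is regular, then $\mathcal{R}\,\dot-\,R$ is a finite rational set of regular languages. (3) In the latter case a different language substitution is in general required: there exist an alphabet $\Delta$, a regular language substitution $\varphi:\Delta\to2^{\Sigma^*}$, a regular $K\subseteq\Delta^+$ with $\mathcal{R}=(K,\varphi)$ finite, and a regular $R\subseteq\Sigma^*$ such that there is no regular $K'\subseteq\Delta^+$ with $\mathcal{R}\,\dot-\,R=(K',\varphi)$.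
   Context: Alphabets are nonempty finite sets. A regular language substitution $\varphi:\Delta\to2^{\Sigma^*}$ maps each symbol to a regular language over $\Sigma$, extended by $\varphi(\delta w)=\varphi(\delta)\varphi(w)$. A set $\mathcal{R}$ of regular languages over $\Sigma$ is a rational set of regular languages, written $\mathcal{R}=(K,\varphi)$, if there are an alphabet $\Delta$, a regular $K\subseteq\Delta^+$ and a regular language substitution $\varphi$ with $\mathcal{R}=\{\varphi(w)\mid w\in K\}$. *)

From mathcomp Require Import all_boot.
Set Implicit Arguments. Unset Strict Implicit. Unset Printing Implicit Defensive.

Definition lang (A : finType) := seq A -> Prop.

Definition lang_eq (A : finType) (L1 L2 : lang A) : Prop := forall w, L1 w <-> L2 w.

Definition regular (A : finType) (L : lang A) : Prop :=
  exists (Q : finType) (q0 : Q) (d : Q -> A -> Q) (F : pred Q),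
    forall w, L w <-> F (foldl d q0 w).

Definition eps_lang (A : finType) : lang A := fun w => w = [::].

Definition conc (A : finType) (L1 L2 : lang A) : lang A :=
  fun w => exists u v, [/\ w = u ++ v, L1 u & L2 v].

Definition subst_word (D A : finType) (phi : D -> lang A) (w : seq D) : lang A :=
  foldr (fun d acc => conc (phi d) acc) (@eps_lang A) w.

(* Sets of languages: predicates on languages (intended up to lang_eq). *)
Definition langset (A : finType) := lang A -> Prop.

Definition gen (D A : finType) (K : lang D) (phi : D -> lang A) : langset A :=
  fun L => exists2 w, K w & lang_eq L (subst_word phi w).

Definition regular_subst (D A : finType) (phi : D -> lang A) : Prop :=
  forall d, regular (phi d).

Definition regular_plus (D : finType) (K : lang D) : Prop :=
  regular K /\ (forall w, K w -> w <> [::]).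

Definition rational_set (A : finType) (calR : langset A) : Prop :=
  exists (D : finType) (K : lang D) (phi : D -> lang A),
    [/\ 0 < #|D|, regular_plus K, regular_subst phi &
        forall L, calR L <-> gen K phi L].

Definition finite_langset (A : finType) (calR : langset A) : Prop :=
  exists (n : nat) (f : 'I_n -> lang A),
    forall L, calR L <-> exists i, lang_eq L (f i).

Definition minus_set (A : finType) (calR : langset A) (R : lang A) : langset A :=
  fun L => exists2 L', calR L' & lang_eq L (fun w => L' w /\ ~ R w).

From mathcomp Require Import all_boot.
From Stdlib Require Import ClassicalEpsilon.
Set Implicit Arguments. Unset Strict Implicit. Unset Printing Implicit Defensive.

(* (1) Over {0,1}, the rational set {Σ^n | n >= 1} minus the words containing
   the factor 10 is the infinite set {0^* 1^* ∩ Σ^n | n >= 1}.  The language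
   0^* 1^* ∩ Σ^n is not a nontrivial product (split 0^n and 1^n and recombine
   the pieces into a word 1^p 0^q), so each of them would have to be the image
   of a single letter: infinitely many letters are needed.
   (2) A finite set of regular languages minus R is a finite set of regular
   languages, and {L_1, ..., L_n} is generated by n letters mapped to the L_i.
   (3) With one letter mapped to Σ, {Σ} minus Σ is {∅}, but every image of a
   nonempty word under this substitution is nonempty. *)

Definition letters (A : finType) : lang A := fun w => size w = 1.

Lemma regular_ext (A : finType) (L1 L2 : lang A) :
  regular L1 -> lang_eq L1 L2 -> regular L2.
Proof.
move=> [Q [q0 [d [F H]]]] E; exists Q, q0, d, F => w.
by split=> [/E/H | /H/E].
Qed.

Lemma foldl_const_true (A : Type) (w : seq A) :
  foldl (fun (_ : bool) (_ : A) => true) true w = true.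
Proof. by elim: w. Qed.

Lemma regular_eps (A : finType) : regular (@eps_lang A).
Proof.
exists bool, false, (fun _ _ => true), (fun b : bool => ~~ b) => w.
by case: w => [|x w] /=; rewrite ?foldl_const_true.
Qed.

Lemma regular_nonempty (A : finType) : regular (fun w : seq A => w <> [::]).
Proof.
exists bool, false, (fun _ _ => true), (fun b : bool => b) => w.
by case: w => [|x w] /=; rewrite ?foldl_const_true.
Qed.

(* The state remembers whether at least one, resp. two, letters were read. *)
Lemma regular_letters (A : finType) : regular (@letters A).
Proof.
exists (bool * bool)%type, (false, false),
  (fun (q : bool * bool) (_ : A) => (true, q.1)),
  (fun q : bool * bool => q.1 && ~~ q.2) => w.
have saturated u : foldl (fun (q : bool * bool) (_ : A) => (true, q.1)) (true, true) u
                   = (true, true) by elim: u.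
by case: w => [|x [|y w]] //=; rewrite saturated.
Qed.

Lemma regular_diff (A : finType) (L R : lang A) :
  regular L -> regular R -> regular (fun w => L w /\ ~ R w).
Proof.
move=> [Q1 [p1 [d1 [F1 H1]]]] [Q2 [p2 [d2 [F2 H2]]]].
exists (Q1 * Q2)%type, (p1, p2), (fun q c => (d1 q.1 c, d2 q.2 c)),
  (fun q => F1 q.1 && ~~ F2 q.2) => w.
have -> : forall q, foldl (fun q c => (d1 q.1 c, d2 q.2 c)) q w
                    = (foldl d1 q.1 w, foldl d2 q.2 w).
  by elim: w => [|c w IH] [a b] //=; rewrite IH.
split=> [[/H1 -> /H2/negP //] | /andP[/H1 ? /negP HR]].
by split=> // /H2.
Qed.

Section ConcAutomaton.
Variables (A Q1 Q2 : finType) (q1 : Q1) (d1 : Q1 -> A -> Q1) (F1 : pred Q1)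
  (q2 : Q2) (d2 : Q2 -> A -> Q2).

(* Run the first automaton, together with the set of states the second one
   reaches when started at each accepting position of the first. *)
Definition conc_start : {set Q2} := if F1 q1 then [set q2] else set0.

Definition conc_step (p : Q1 * {set Q2}) (c : A) : Q1 * {set Q2} :=
  (d1 p.1 c,
   [set d2 q c | q in p.2] :|: (if F1 (d1 p.1 c) then [set q2] else set0)).

Lemma foldl_conc_step w :
  (foldl conc_step (q1, conc_start) w).1 = foldl d1 q1 w /\
  (forall q, q \in (foldl conc_step (q1, conc_start) w).2 <->
    exists u v, [/\ w = u ++ v, F1 (foldl d1 q1 u) & q = foldl d2 q2 v]).
Proof.
elim/last_ind: w => [|w c [IH1 IH2]].
  split=> // q /=; rewrite /conc_start; split.
    by case: ifP => H; rewrite ?in_set0 // in_set1 => /eqP ->; exists [::], [::].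
  by case=> [[|x u] [[|y v] [//= _ H ->]]]; rewrite H in_set1.
rewrite !foldl_rcons /=; split; first by rewrite IH1.
move=> q; rewrite in_setU IH1; split.
  case/orP.
    case/imsetP=> q0 /IH2 [u [v [-> Hu ->]]].
    by exists u, (rcons v c); rewrite rcons_cat foldl_rcons.
  case: ifP => H; rewrite ?in_set0 // in_set1 => /eqP ->.
  by exists (rcons w c), [::]; rewrite cats0 foldl_rcons.
case=> u [v []]; case/lastP: v => [|v c'].
  by rewrite cats0 => <- Hu ->; rewrite -foldl_rcons Hu in_set1 eqxx orbT.
rewrite -rcons_cat => /rcons_inj [Ew <-] Hu ->.
by rewrite foldl_rcons imset_f //; apply/IH2; exists u, v.
Qed.

End ConcAutomaton.

Lemma regular_conc (A : finType) (L1 L2 : lang A) :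
  regular L1 -> regular L2 -> regular (conc L1 L2).
Proof.
move=> [Q1 [p1 [d1 [F1 H1]]]] [Q2 [p2 [d2 [F2 H2]]]].
exists (Q1 * {set Q2})%type, (p1, conc_start p1 F1 p2), (conc_step d1 F1 p2 d2),
  (fun p : Q1 * {set Q2} => [exists q in p.2, F2 q]) => w.
have [_ reach] := foldl_conc_step p1 d1 F1 p2 d2 w.
split.
  case=> u [v [Ew /H1 Hu /H2 Hv]]; apply/existsP; exists (foldl d2 p2 v).
  by rewrite Hv andbT; apply/reach; exists u, v.
case/existsP=> q /andP [/reach [u [v [-> Hu ->]]] Hv].
by exists u, v; split; [| apply/H1 | apply/H2].
Qed.

Lemma regular_subst_word (D A : finType) (phi : D -> lang A) w :
  regular_subst phi -> regular (subst_word phi w).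
Proof.
move=> Hphi; elim: w => [|d w IH] /=; first exact: regular_eps.
exact: regular_conc.
Qed.

Lemma subst_word_seq1 (D A : finType) (phi : D -> lang A) d :
  lang_eq (subst_word phi [:: d]) (phi d).
Proof.
move=> w; split; first by case=> u [v [-> Hu ->]]; rewrite cats0.
by move=> Hw; exists w, [::]; rewrite cats0.
Qed.

Lemma subst_word_letters (D A : finType) (w : seq D) (u : seq A) :
  subst_word (fun _ => @letters A) w u <-> size u = size w.
Proof.
elim: w u => [|d w IH] u /=.
  by split=> [-> // | /size0nil].
split; first by case=> x [v [-> Hx /IH Hv]]; rewrite size_cat Hx Hv.
by case: u => [|x u] //= [/IH Hu]; exists [:: x], u.
Qed.

Lemma subst_word_inhabited (D A : finType) (phi : D -> lang A) w :
  (forall d, exists u, phi d u) -> exists u, subst_word phi w u.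
Proof.
move=> Hphi; elim: w => [|d w [v Hv]]; first by exists [::].
by have [u Hu] := Hphi d; exists (u ++ v), u, v.
Qed.

Lemma conc_eps_l (A : finType) (L1 L2 : lang A) :
  lang_eq L1 (@eps_lang A) -> lang_eq (conc L1 L2) L2.
Proof.
move=> E w; split; first by case=> u [v [-> /E -> Hv]].
by move=> Hw; exists [::], w; split=> //; apply/E.
Qed.

Lemma conc_eps_r (A : finType) (L1 L2 : lang A) :
  lang_eq L2 (@eps_lang A) -> lang_eq (conc L1 L2) L1.
Proof.
move=> E w; split; first by case=> u [v [-> Hu /E ->]]; rewrite cats0.
by move=> Hw; exists w, [::]; rewrite cats0; split=> //; apply/E.
Qed.

(* For words over bool, [sorted implb] means belonging to 0^* 1^*. *)
Definition sorted_words (n : nat) : lang bool :=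
  fun w => size w = n /\ sorted implb w.

Definition unsorted_words : lang bool := fun w => ~~ sorted implb w.

Lemma regular_unsorted_words : regular unsorted_words.
Proof.
pose step (q : bool * bool) c := (q.1 || (q.2 && ~~ c), c).
exists (bool * bool)%type, (false, false), step, (fun q : bool * bool => q.1) => w.
have run b l : (foldl step (b, l) w).1 = b || ~~ path implb l w.
  elim: w b l => [|c w IH] b l /=; first by rewrite orbF.
  by rewrite IH; case: b; case: l; case: c.
by rewrite run; case: {run} w.
Qed.

Lemma sorted_words_nseq n b : sorted_words n (nseq n b).
Proof.
split; first exact: size_nseq.
by case: n => //= n; elim: n => //= n ->; rewrite implybb.
Qed.

Lemma sorted_words_inj m n : lang_eq (sorted_words m) (sorted_words n) -> m = n.
Proof.
by move=> E; have [<- _] := (E (nseq m false)).1 (sorted_words_nseq m false);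
  rewrite size_nseq.
Qed.

Lemma sorted_cat_true_false (u v : seq bool) :
  all (pred1 true) u -> all (pred1 false) v -> sorted implb (u ++ v) ->
  u = [::] \/ v = [::].
Proof.
case: u => [|x u]; first by left.
case: v => [|y v]; first by right.
move=> Hu /andP [/eqP -> _]; rewrite /= cat_path => /andP [_] /=.
by have /eqP -> : last x u == true by apply: (allP Hu); exact: mem_last.
Qed.

Lemma sorted_words_conc n (L1 L2 : lang bool) :
  lang_eq (sorted_words n) (conc L1 L2) ->
  lang_eq (sorted_words n) L1 \/ lang_eq (sorted_words n) L2.
Proof.
move=> E.
have size_cat_mem u v : L1 u -> L2 v -> size u + size v = n.
  move=> Hu Hv; rewrite -size_cat.
  by have /E [] : conc L1 L2 (u ++ v) by exists u, v.
have [u0 [v0 [e0 _ Hv0]]] := (E _).1 (sorted_words_nseq n false).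
have [u1 [v1 [e1 Hu1 Hv1]]] := (E _).1 (sorted_words_nseq n true).
have [_ sorted10] : sorted_words n (u1 ++ v0) by apply/E; exists u1, v0.
have all_true : all (pred1 true) u1.
  by have := all_pred1_nseq true n; rewrite e1 all_cat => /andP [].
have all_false : all (pred1 false) v0.
  by have := all_pred1_nseq false n; rewrite e0 all_cat => /andP [].
case: (sorted_cat_true_false all_true all_false sorted10) => [u1_nil | v0_nil].
- right; have L1_eps : lang_eq L1 (@eps_lang bool).
    move=> u; split=> [Hu | ->]; last by rewrite -u1_nil.
    apply/size0nil; have := size_cat_mem _ _ Hu Hv1.
    by have := size_cat_mem _ _ Hu1 Hv1; rewrite u1_nil => <- /eqP; rewrite eqn_add2r => /eqP.
  by move=> w; apply: iff_trans (E w) _; exact: conc_eps_l.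
- left; have L2_eps : lang_eq L2 (@eps_lang bool).
    move=> v; split=> [Hv | ->]; last by rewrite -v0_nil.
    apply/size0nil; have := size_cat_mem _ _ Hu1 Hv.
    by have := size_cat_mem _ _ Hu1 Hv0; rewrite v0_nil => <- /eqP; rewrite eqn_add2l => /eqP.
  by move=> w; apply: iff_trans (E w) _; exact: conc_eps_r.
Qed.

Lemma subst_word_sorted_words (D : finType) (phi : D -> lang bool) n w :
  0 < n -> lang_eq (sorted_words n) (subst_word phi w) ->
  exists d, lang_eq (sorted_words n) (phi d).
Proof.
move=> n_gt0; elim: w => [|d w IH] /= E.
  have := (E _).1 (sorted_words_nseq n false).
  by case: n n_gt0 {E}.
by case: (sorted_words_conc E) => [|/IH]; [exists d|].
Qed.

Lemma injective_lang_family_not_covered (D A : finType) (phi : D -> lang A) (P : nat -> lang A) :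
  (forall m n, lang_eq (P m) (P n) -> m = n) ->
  ~ (forall n, exists d, lang_eq (P n) (phi d)).
Proof.
move=> P_inj covered.
pose f n := proj1_sig (constructive_indefinite_description _ (covered n)).
have Pf n : lang_eq (P n) (phi (f n)).
  exact: proj2_sig (constructive_indefinite_description _ (covered n)).
have f_inj : injective (fun i : 'I_#|D|.+1 => f i).
  move=> i j /= fij; apply/val_inj/P_inj => w.
  by apply: iff_trans (Pf i w) _; rewrite fij; apply: iff_sym; apply: Pf.
by have := leq_card _ f_inj; rewrite card_ord ltnn.
Qed.

Lemma rational_set_regular (A : finType) (calR : langset A) L :
  rational_set calR -> calR L -> regular L.
Proof.
move=> [D [K [phi [_ _ Hphi HR]]]] /HR [w _ E].
by apply: regular_ext (regular_subst_word w Hphi) _ => u; apply: iff_sym.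
Qed.

Lemma gen_letters (D A : finType) (phi : D -> lang A) L :
  gen (@letters D) phi L <-> exists d, lang_eq L (phi d).
Proof.
split=> [[[|d [|]] //= _ E] | [d E]].
  by exists d => w; apply: iff_trans (E w) _; exact: subst_word_seq1.
by exists [:: d] => // w; apply: iff_trans (E w) _; apply: iff_sym; exact: subst_word_seq1.
Qed.

Lemma rational_set_finite (A : finType) n (f : 'I_n -> lang A) :
  (forall i, regular (f i)) -> rational_set (fun L => exists i, lang_eq L (f i)).
Proof.
case: n f => [|n] f f_reg.
  exists unit, (fun _ => False), (fun _ => @letters A); split=> //.
  - by rewrite card_unit.
  - by split=> //; exists unit, tt, (fun _ _ => tt), pred0.
  - by move=> d; exact: regular_letters.
  - by move=> L; split=> [[[]] | []].
exists 'I_n.+1, (@letters _), f; split=> //.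
- by rewrite card_ord.
- by split; [exact: regular_letters | case].
- by move=> L; rewrite gen_letters.
Qed.

Lemma minus_set_finite (A : finType) (calR : langset A) R n (f : 'I_n -> lang A) :
  (forall L, calR L <-> exists i, lang_eq L (f i)) ->
  forall L, minus_set calR R L <-> exists i, lang_eq L (fun w => f i w /\ ~ R w).
Proof.
move=> Hf L; split.
  case=> L' /Hf [i Ei] EL; exists i => w; apply: iff_trans (EL w) _.
  by split=> -[/Ei Hw HR].
by case=> i Ei; exists (f i) => //; apply/Hf; exists i.
Qed.

Lemma sorted_words_in_minus_set n :
  minus_set (gen (fun w : seq unit => w <> [::]) (fun _ => @letters bool))
    unsorted_words (sorted_words n.+1).
Proof.
exists (subst_word (fun _ => @letters bool) (nseq n.+1 tt)); first by exists (nseq n.+1 tt).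
move=> w; rewrite subst_word_letters size_nseq /unsorted_words /sorted_words.
by split=> [[-> ->] | [-> /negP]] //; case: sorted.
Qed.

Lemma rational_set_minus_not_rational :
  exists (S : finType) (calR : langset S) (R : lang S),
    [/\ 0 < #|S|, rational_set calR, regular R & ~ rational_set (minus_set calR R)].
Proof.
exists bool, (gen (fun w : seq unit => w <> [::]) (fun _ => @letters bool)), unsorted_words.
split; [by rewrite card_bool | | exact: regular_unsorted_words | ].
  exists unit, (fun w : seq unit => w <> [::]), (fun _ => @letters bool); split=> //.
  - by rewrite card_unit.
  - by split; [exact: regular_nonempty | ].
  - by move=> d; exact: regular_letters.
case=> D [K [phi [_ _ _ HR]]].
apply: (@injective_lang_family_not_covered _ _ phi (fun n => sorted_words n.+1)).
  by move=> m n /sorted_words_inj [].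
move=> n; have /HR [w _ E] := sorted_words_in_minus_set n.
exact: subst_word_sorted_words E.
Qed.

Lemma finite_rational_set_minus (S : finType) (calR : langset S) (R : lang S) :
  rational_set calR -> finite_langset calR -> regular R ->
  rational_set (minus_set calR R) /\ finite_langset (minus_set calR R).
Proof.
move=> calR_rat [n [f Hf]] R_reg.
have f_reg i : regular (f i) by apply: rational_set_regular calR_rat _; apply/Hf; exists i.
have Hminus := minus_set_finite R Hf.
split; last by exists n, (fun i w => f i w /\ ~ R w).
have [D [K [phi [? ? ? Hgen]]]] := rational_set_finite (fun i => regular_diff (f_reg i) R_reg).
by exists D, K, phi; split=> // L; apply: iff_trans (Hminus L) (Hgen L).
Qed.

Lemma minus_set_not_gen_same_subst :
  exists (S D : finType) (phi : D -> lang S) (K : lang D) (R : lang S),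
    [/\ 0 < #|S| /\ 0 < #|D|, regular_subst phi /\ regular_plus K,
        finite_langset (gen K phi), regular R &
        ~ exists K' : lang D, regular_plus K' /\
            (forall L, minus_set (gen K phi) R L <-> gen K' phi L)].
Proof.
exists unit, unit, (fun _ => @letters unit), (@letters unit), (@letters unit); split.
- by rewrite card_unit.
- by split; [move=> d; exact: regular_letters | split; [exact: regular_letters | case]].
- exists 1, (fun _ => @letters unit) => L; rewrite gen_letters.
  by split=> -[_ E]; [exists ord0 | exists tt].
- exact: regular_letters.
case=> K' [_ HK'].
have : minus_set (gen (@letters unit) (fun _ => @letters unit)) (@letters unit) (fun _ => False).
  by exists (@letters unit); [apply/gen_letters; exists tt | move=> w; split=> // -[]].
move/HK' => [w _ E].
have [u Hu] := subst_word_inhabited w (fun _ : unit => ex_intro (@letters unit) [:: tt] erefl).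
exact: (E u).2 Hu.
Qed.

Theorem proposition10 :
  (* (1) *)
  (exists (S : finType) (calR : langset S) (R : lang S),
     [/\ 0 < #|S|, rational_set calR, regular R &
         ~ rational_set (minus_set calR R)])
  /\
  (* (2) *)
  (forall (S : finType) (calR : langset S) (R : lang S),
     0 < #|S| -> rational_set calR -> finite_langset calR -> regular R ->
     rational_set (minus_set calR R) /\ finite_langset (minus_set calR R))
  /\
  (* (3) *)
  (exists (S D : finType) (phi : D -> lang S) (K : lang D) (R : lang S),
     [/\ 0 < #|S| /\ 0 < #|D|, regular_subst phi /\ regular_plus K,
         finite_langset (gen K phi), regular R &
         ~ exists K' : lang D, regular_plus K' /\
             (forall L, minus_set (gen K phi) R L <-> gen K' phi L)]).
Proof.
split; first exact: rational_set_minus_not_rational.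
split; last exact: minus_set_not_gen_same_subst.
by move=> S calR R _; exact: finite_rational_set_minus.
Qed.
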